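(* Let $I\in\{0,1\}^{n\times m}$ be clarified. Then $\mathcal{E}(I)$ is an essential part of $I$, and it is the unique essential part of $I$: i.e. $\mathcal{E}(I)\leq I$, for every $\mathcal{F}\subseteq\mathcal{B}(I)$ the condition $\mathcal{E}(I)\leq A_{\mathcal{F}}\circ B_{\mathcal{F}}$ implies $I=A_{\mathcal{F}}\circ B_{\mathcal{F}}$, and every $J\leq I$ with this same property satisfies $\mathcal{E}(I)\leq J$.
   Context: $I\in\{0,1\}^{n\times m}$, $X=\{1,\dots,n\}$, $Y=\{1,\dots,m\}$. $I$ is clarified if it has no two identical rows and no two identical columns. For matrices, $J_1\leq J_2$ means entrywise $\leq$. For $C\subseteq X$, $D\subseteq Y$: $C^{\uparrow}=\{j\in Y\mid \forall i\in C: I_{ij}=1\}$, $D^{\downarrow}=\{i\in X\mid \forall j\in D: I_{ij}=1\}$. $\mathcal{B}(I)=\{\langle C,D\rangle\mid C^\uparrow=D, D^\downarrow=C\}$ with order $\langle C_1,D_1\rangle\leq\langle C_2,D_2\rangle$ iff $C_1\subseteq C_2$. $\gamma(i)=\langle\{i\}^{\uparrow\downarrow},\{i\}^{\uparrow}\rangle$, $\mu(j)=\langle\{j\}^{\downarrow},\{j\}^{\downarrow\uparrow}\rangle$, and $\mathcal{I}_{ij}=\{c\in\mathcal{B}(I)\mid \gamma(i)\leq c\leq\mu(j)\}$. $\mathcal{E}(I)\in\{0,1\}^{n\times m}$ is defined by $\mathcal{E}(I)_{ij}=1$ iff $\mathcal{I}_{ij}$ is non-empty and minimal w.r.t. $\subseteq$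 among the non-empty sets $\mathcal{I}_{i'j'}$ ($i'\in X$, $j'\in Y$). Boolean product: $(A\circ B)_{ij}=\max_l\min(A_{il},B_{lj})$. For $\mathcal{F}=\{\langle C_1,D_1\rangle,\dots,\langle C_p,D_p\rangle\}\subseteq\mathcal{B}(I)$, $(A_{\mathcal{F}})_{il}=1$ iff $i\in C_l$, $(B_{\mathcal{F}})_{lj}=1$ iff $j\in D_l$. A matrix $J\leq I$ is an essential part of $I$ if for every $\mathcal{F}\subseteq\mathcal{B}(I)$, $J\leq A_{\mathcal{F}}\circ B_{\mathcal{F}}$ implies $I=A_{\mathcal{F}}\circ B_{\mathcal{F}}$, and $J$ is minimal w.r.t. $\leq$ among matrices $J'\leq I$ with this property. *)

From mathcomp Require Import all_boot all_order all_algebra.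
Set Implicit Arguments. Unset Strict Implicit. Unset Printing Implicit Defensive.

Section FCA.
Variables (n m : nat).
Implicit Types (I J : 'M[bool]_(n, m)).

Definition mxle I J : Prop := forall i j, I i j ==> J i j.

Definition clarified I : Prop :=
  (forall i i' : 'I_n, (forall j, I i j = I i' j) -> i = i') /\
  (forall j j' : 'I_m, (forall i, I i j = I i j') -> j = j').

Definition up I (C : {set 'I_n}) : {set 'I_m} := [set j | [forall i in C, I i j]].
Definition down I (D : {set 'I_m}) : {set 'I_n} := [set i | [forall j in D, I i j]].

Definition concept := ({set 'I_n} * {set 'I_m})%type.

Definition concepts I : {set concept} :=
  [set c : concept | (up I c.1 == c.2) && (down I c.2 == c.1)].

Definition cle (c1 c2 : concept) : bool := c1.1 \subset c2.1.

Definition gamma I (i : 'I_n) : concept := (down I (up I [set i]), up I [set i]).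
Definition mu I (j : 'I_m) : concept := (down I [set j], up I (down I [set j])).

Definition interval I (i : 'I_n) (j : 'I_m) : {set concept} :=
  [set c in concepts I | cle (gamma I i) c && cle c (mu I j)].

Definition Emx I : 'M[bool]_(n, m) :=
  \matrix_(i, j) ((interval I i j != set0) &&
     [forall i', forall j', (interval I i' j' != set0) ==>
                              ~~ (interval I i' j' \proper interval I i j)]).

Definition bprod (p : nat) (A : 'M[bool]_(n, p)) (B : 'M[bool]_(p, m)) : 'M[bool]_(n, m) :=
  \matrix_(i, j) [exists l, A i l && B l j].

(* A_F and B_F, the concepts of F being indexed by 'I_#|F| via enum_val *)
Definition AF (F : {set concept}) : 'M[bool]_(n, #|F|) :=
  \matrix_(i < n, l < #|F|) (i \in (@enum_val _ F l : concept).1).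
Definition BF (F : {set concept}) : 'M[bool]_(#|F|, m) :=
  \matrix_(l < #|F|, j < m) (j \in (@enum_val _ F l : concept).2).

Definition covers_all I J : Prop :=
  forall F : {set concept}, F \subset concepts I ->
    mxle J (bprod (AF F) (BF F)) -> I = bprod (AF F) (BF F).

Definition essential_part I J : Prop :=
  mxle J I /\ covers_all I J /\
  (forall J', mxle J' I -> covers_all I J' -> mxle J' J -> J' = J).

End FCA.

From Pilot Require Import Defs.
From mathcomp Require Import all_boot all_order all_algebra.
Set Implicit Arguments. Unset Strict Implicit. Unset Printing Implicit Defensive.

(* The concepts [c] with [i \in c.1] and [j \in c.2] form the interval I_ij, which
   is non-empty exactly when [I i j].  Inclusion of intervals forces inclusion of
   the corresponding rows and columns (test with the object concept gamma i and
   the attribute concept mu j), so for a clarified I distinct incidences have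
   distinct intervals.  Every incidence lies above a minimal interval, hence E(I)
   covers; conversely, if J misses a minimal incidence (i, j), the concepts
   outside I_ij already cover J but not (i, j), so every covering J contains E(I). *)

Section DerivationOperators.

Variables (n m : nat) (I : 'M[bool]_(n, m)).
Implicit Types (C : {set 'I_n}) (D : {set 'I_m}) (c : concept n m).

Lemma sub_down C D : (C \subset down I D) = (D \subset up I C).
Proof.
apply/subsetP/subsetP => sub x x_in; rewrite inE; apply/forall_inP => y y_in.
  by move: (sub y y_in); rewrite inE => /forall_inP; apply.
by move: (sub y y_in); rewrite inE => /forall_inP; apply.
Qed.

Lemma sub_down_up C : C \subset down I (up I C).
Proof. by rewrite sub_down. Qed.

Lemma sub_up_down D : D \subset up I (down I D).
Proof. by rewrite -sub_down. Qed.

Lemma up_anti C1 C2 : C1 \subset C2 -> up I C2 \subset up I C1.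
Proof. by move=> sub12; rewrite -sub_down (subset_trans sub12) ?sub_down_up. Qed.

Lemma down_anti D1 D2 : D1 \subset D2 -> down I D2 \subset down I D1.
Proof. by move=> sub12; rewrite sub_down (subset_trans sub12) ?sub_up_down. Qed.

Lemma up_down_up C : up I (down I (up I C)) = up I C.
Proof. by apply/eqP; rewrite eqEsubset sub_up_down up_anti ?sub_down_up. Qed.

Lemma down_up_down D : down I (up I (down I D)) = down I D.
Proof. by apply/eqP; rewrite eqEsubset sub_down_up down_anti ?sub_up_down. Qed.

Lemma mem_up1 i j : (j \in up I [set i]) = I i j.
Proof.
rewrite inE; apply/forall_inP/idP => [/(_ i (set11 i)) // | Iij k].
by rewrite inE => /eqP ->.
Qed.

Lemma mem_down1 i j : (i \in down I [set j]) = I i j.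
Proof.
rewrite inE; apply/forall_inP/idP => [/(_ j (set11 j)) // | Iij k].
by rewrite inE => /eqP ->.
Qed.

Lemma conceptP c : c \in concepts I -> up I c.1 = c.2 /\ down I c.2 = c.1.
Proof. by rewrite inE => /andP[/eqP -> /eqP ->]. Qed.

Lemma gamma_concept i : gamma I i \in concepts I.
Proof. by rewrite inE /= up_down_up !eqxx. Qed.

Lemma mu_concept j : mu I j \in concepts I.
Proof. by rewrite inE /= down_up_down !eqxx. Qed.

Lemma cle_gamma i c : c \in concepts I -> cle (gamma I i) c = (i \in c.1).
Proof. by rewrite /cle /= => /conceptP[_ <-]; rewrite sub_down up_down_up -sub_down sub1set. Qed.

Lemma cle_mu j c : c \in concepts I -> cle c (mu I j) = (j \in c.2).
Proof. by rewrite /cle /= => /conceptP[<- _]; rewrite sub_down sub1set. Qed.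

Lemma concept_entry i j c : c \in concepts I -> i \in c.1 -> j \in c.2 -> I i j.
Proof. by move=> /conceptP[_ <-]; rewrite inE => /forall_inP; apply. Qed.

End DerivationOperators.

Section Intervals.

Variables (n m : nat) (I : 'M[bool]_(n, m)).
Implicit Types (i : 'I_n) (j : 'I_m) (c : concept n m).

Lemma mem_interval i j c :
  (c \in Defs.interval I i j) = [&& c \in concepts I, i \in c.1 & j \in c.2].
Proof.
by rewrite inE; case cI: (c \in concepts I); rewrite //= cle_gamma ?cle_mu.
Qed.

Lemma gamma_in_interval i i' j :
  (gamma I i \in Defs.interval I i' j) = [forall k, I i k ==> I i' k] && I i j.
Proof.
rewrite mem_interval gamma_concept mem_up1 /= inE; congr (_ && _).
apply/forall_inP/forallP => [row_sub k | row_sub k].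
  by apply/implyP; rewrite -mem_up1; apply: row_sub.
by rewrite mem_up1; apply/implyP/row_sub.
Qed.

Lemma mu_in_interval j i j' :
  (mu I j \in Defs.interval I i j') = I i j && [forall k, I k j ==> I k j'].
Proof.
rewrite mem_interval mu_concept mem_down1 /= inE; congr (_ && _).
apply/forall_inP/forallP => [col_sub k | col_sub k].
  by apply/implyP; rewrite -mem_down1; apply: col_sub.
by rewrite mem_down1; apply/implyP/col_sub.
Qed.

Lemma interval_neq0 i j : (Defs.interval I i j != set0) = I i j.
Proof.
apply/set0Pn/idP => [[c] | Iij].
  by rewrite mem_interval => /and3P[]; apply: concept_entry.
exists (gamma I i); rewrite gamma_in_interval Iij andbT.
by apply/forallP => k; rewrite implybb.
Qed.

Lemma interval_sub_row i j i' j' :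
  I i j -> Defs.interval I i j \subset Defs.interval I i' j' ->
  forall k, I i k ==> I i' k.
Proof.
move=> Iij /subsetP sub; apply/forallP.
have: gamma I i \in Defs.interval I i j.
  by rewrite gamma_in_interval Iij andbT; apply/forallP => k; rewrite implybb.
by move/sub; rewrite gamma_in_interval => /andP[].
Qed.

Lemma interval_sub_col i j i' j' :
  I i j -> Defs.interval I i j \subset Defs.interval I i' j' ->
  forall k, I k j ==> I k j'.
Proof.
move=> Iij /subsetP sub; apply/forallP.
have: mu I j \in Defs.interval I i j.
  by rewrite mu_in_interval Iij; apply/forallP => k; rewrite implybb.
by move/sub; rewrite mu_in_interval => /andP[].
Qed.

Lemma interval_inj i j i' j' :
  clarified I -> I i j -> Defs.interval I i j = Defs.interval I i' j' ->
  i = i' /\ j = j'.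
Proof.
move=> [row_inj col_inj] Iij eq_ij.
have Ii'j' : I i' j' by rewrite -interval_neq0 -eq_ij interval_neq0.
have [sub sub'] : Defs.interval I i j \subset Defs.interval I i' j' /\
                  Defs.interval I i' j' \subset Defs.interval I i j.
  by rewrite eq_ij subxx.
split; [apply: row_inj | apply: col_inj] => k; apply/idP/idP; apply/implyP.
- exact: interval_sub_row Iij sub k.
- exact: interval_sub_row Ii'j' sub' k.
- exact: interval_sub_col Iij sub k.
- exact: interval_sub_col Ii'j' sub' k.
Qed.

End Intervals.

Section BooleanProducts.

Variables (n m : nat).
Implicit Types (A B : 'M[bool]_(n, m)) (F : {set concept n m}).

Lemma mxle_anti A B : mxle A B -> mxle B A -> A = B.
Proof.
move=> leAB leBA; apply/matrixP => i j.
by move: (leAB i j) (leBA i j); case: (A i j); case: (B i j).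
Qed.

Lemma bprodFE F i j :
  bprod (AF F) (BF F) i j = [exists c in F, (i \in c.1) && (j \in c.2)].
Proof.
rewrite mxE; apply/existsP/existsP => [[l] | [c /andP[cF ij_c]]].
  by rewrite !mxE => ij_l; exists (enum_val l); rewrite enum_valP.
by exists (enum_rank_in cF c); rewrite !mxE enum_rankK_in.
Qed.

Lemma bprodF_le (I : 'M[bool]_(n, m)) F :
  F \subset concepts I -> mxle (bprod (AF F) (BF F)) I.
Proof.
move=> /subsetP FI i j; apply/implyP; rewrite bprodFE.
by case/exists_inP=> c cF /andP[]; apply: concept_entry (FI c cF).
Qed.

End BooleanProducts.

Section EssentialPart.

Variables (n m : nat) (I : 'M[bool]_(n, m)).

Lemma Emx_le : mxle (Emx I) I.
Proof. by move=> i j; rewrite mxE -interval_neq0; apply/implyP => /andP[]. Qed.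

Lemma Emx_below i j : I i j ->
  exists i' j', Emx I i' j' /\ Defs.interval I i' j' \subset Defs.interval I i j.
Proof.
move=> Iij.
pose below p := I p.1 p.2 && (Defs.interval I p.1 p.2 \subset Defs.interval I i j).
have below_ij : below (i, j) by rewrite /below Iij subxx.
case: (arg_minnP (fun p => #|Defs.interval I p.1 p.2|) below_ij).
move=> [i' j'] /andP[/= Ii'j' sub] min_ij'; exists i', j'; split=> //.
rewrite mxE interval_neq0 Ii'j'; apply/forallP => i''; apply/forallP => j''.
rewrite interval_neq0; apply/implyP => Ii''j''; apply/negP => lt_ij''.
have := min_ij' (i'', j''); rewrite /below Ii''j'' (subset_trans (proper_sub lt_ij'') sub).
by rewrite leqNgt (proper_card lt_ij'') => /(_ isT).
Qed.

Lemma Emx_covers : covers_all I (Emx I).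
Proof.
move=> F FI leEF; apply: mxle_anti (bprodF_le FI) => i j; apply/implyP => Iij.
have [i' [j' [Ei'j' sub]]] := Emx_below Iij.
move: (leEF i' j'); rewrite Ei'j' bprodFE => /exists_inP[c cF /andP[i'c j'c]].
have : c \in Defs.interval I i' j' by rewrite mem_interval i'c j'c (subsetP FI).
move=> /(subsetP sub); rewrite mem_interval bprodFE => /and3P[_ ic jc].
by apply/exists_inP; exists c; rewrite ?ic.
Qed.

Lemma Emx_interval_sub i j i' j' : clarified I -> Emx I i j -> I i' j' ->
  Defs.interval I i' j' \subset Defs.interval I i j -> i' = i /\ j' = j.
Proof.
move=> clI; rewrite mxE => /andP[_ /forallP min_ij] Ii'j' sub.
apply: (interval_inj clI Ii'j'); apply/eqP; rewrite eqEsubset sub /=.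
move: (min_ij i') => /forallP /(_ j') /implyP.
by rewrite interval_neq0 Ii'j' /proper sub /= negbK; apply.
Qed.

(* The concepts outside I_ij cover every incidence of I except those whose
   interval lies inside I_ij, which for a minimal I_ij is (i, j) alone. *)
Lemma Emx_least J : clarified I -> mxle J I -> covers_all I J -> mxle (Emx I) J.
Proof.
move=> clI leJI covJ i j; apply/implyP => Eij; apply/negPn/negP => nJij.
pose F := [set c in concepts I | c \notin Defs.interval I i j].
have FI : F \subset concepts I by apply/subsetP => c; rewrite inE => /andP[].
have leJF : mxle J (bprod (AF F) (BF F)).
  move=> i' j'; apply/implyP => Ji'j'.
  have Ii'j' : I i' j' by apply: implyP (leJI i' j') Ji'j'.
  have [sub | /subsetPn[c c_in c_out]] :=
    boolP (Defs.interval I i' j' \subset Defs.interval I i j).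
    have [ei ej] := Emx_interval_sub clI Eij Ii'j' sub.
    by move: Ji'j'; rewrite ei ej (negbTE nJij).
  move: c_in; rewrite mem_interval bprodFE => /and3P[cI i'c j'c].
  by apply/exists_inP; exists c; rewrite ?i'c // inE cI c_out.
have Iij : I i j by apply: implyP (Emx_le i j) Eij.
move: Iij; rewrite (covJ F FI leJF) bprodFE => /exists_inP[c].
by rewrite inE mem_interval => /andP[cI /negP c_out] /andP[ic jc]; rewrite cI ic jc in c_out.
Qed.

End EssentialPart.

Theorem theorem2 (n m : nat) (I : 'M[bool]_(n, m)) :
  clarified I ->
  essential_part I (Emx I) /\
  (forall J, essential_part I J -> J = Emx I) /\
  mxle (Emx I) I /\
  covers_all I (Emx I) /\
  (forall J, mxle J I -> covers_all I J -> mxle (Emx I) J).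
Proof.
move=> clI.
have least J : mxle J I -> covers_all I J -> mxle (Emx I) J := Emx_least clI.
have essE : essential_part I (Emx I).
  split; [exact: Emx_le | split; first exact: Emx_covers].
  by move=> J leJI covJ leJE; apply: mxle_anti leJE (least J leJI covJ).
split=> //; split=> [J [leJI [covJ minJ]] |].
  by apply/esym/minJ; [exact: Emx_le | exact: Emx_covers | exact: least].
by split; [exact: Emx_le | split; [exact: Emx_covers | exact: least]].
Qed.
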